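(* In Algorithm MC (with $|b_j(v)|\le\deg(v)$ for all $v,j$ and $\alpha\in(0,1/4]$), for every round $i$, $v\in V$ and $j\in[k]$: if $\tilde\phi^i_{v,j}>0$ then $r^{\le i-1}_{v,j}\ge\frac{\ln n}{\alpha}$, and if $\tilde\phi^i_{v,j}<0$ then $r^{\le i-1}_{v,j}\le-\frac{\ln n}{\alpha}$.
   Context: Let $G=(V,E)$ be a unit-capacity undirected graph, $n=|V|\ge3$, every vertex of degree $\deg(v)\ge1$, each edge with a fixed arbitrary orientation; $B\in\mathbb R^{V\times E}$ is the incidence matrix (column $(u,v)$ has $+1$ in row $u$, $-1$ in row $v$, $0$ elsewhere). Algorithm MC takes $k\ge1$, $b=(b_1,\dots,b_k)\in\mathbb R^{V\times[k]}$ with $|b_j(v)|\le\deg(v)$ for all $v,j$, $\alpha\in(0,1/4]$ and an integer $T\ge1$. Set $w^1_{v,j,+}=w^1_{v,j,-}=1$. For $i=1,\dots,T$: (1) $\tilde w^i_{v,j,\circ}=w^i_{v,j,\circ}$ if $w^i_{v,j,\circ}\ge n$ and $0$ otherwise ($\circ\in\{+,-\}$); (2) $\tilde\phi^i_{v,j}=(\tilde w^i_{v,j,+}-\tilde w^i_{v,j,-})/\deg(v)$; (3) for each edge $(u,v)$ let $j^*$ maximize $|\tilde\phi^i_{u,j}-\tilde\phi^i_{v,j}|$ over $j\in[k]$ (ties arbitrary), set $f^i_{j^*}(u,v)=+1$ if $\tilde\phi^i_{u,j^*}>\tilde\phi^i_{v,j^*}$, $-1$ if $<$, $0$ otherwise,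 and $f^i_j(u,v)=0$ for $j\ne j^*$; (4) if $\sum_{j,v}\tilde\phi^i_{v,j}b_j(v)>\sum_{j,v}\tilde\phi^i_{v,j}(Bf^i_j)_v$, terminate; (5) $r^i_{v,j}=(b_j(v)-(Bf^i_j)_v)/\deg(v)$; (6) $w^{i+1}_{v,j,+}=w^i_{v,j,+}(1+\alpha r^i_{v,j})$, $w^{i+1}_{v,j,-}=w^i_{v,j,-}(1-\alpha r^i_{v,j})$. Write $r^{\le i}_{v,j}=\sum_{i'=1}^{i}r^{i'}_{v,j}$, with $r^{\le0}_{v,j}=0$. *)

From HB Require Import structures.
From mathcomp Require Import all_boot all_order all_algebra.
From mathcomp Require Import reals exp.
Set Implicit Arguments. Unset Strict Implicit. Unset Printing Implicit Defensive.
Import Order.TTheory GRing.Theory Num.Theory.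
Local Open Scope ring_scope.

(* A graph is given by a finite vertex type V, a finite edge type E and the
   fixed orientation of each edge: edge e is oriented (src e, dst e). *)

Definition deg (V E : finType) (src dst : E -> V) (v : V) : nat :=
  #|[set e : E | (src e == v) || (dst e == v)]|.

(* (B g)_v for g : E -> R, B the incidence matrix:
   column (u,v) has +1 in row u and -1 in row v. *)
Definition incid (R : realType) (V E : finType) (src dst : E -> V)
  (g : E -> R) (v : V) : R :=
  \sum_(e : E) ((if src e == v then g e else 0) - (if dst e == v then g e else 0)).

Definition wtrunc (R : realType) (n : nat) (w : R) : R :=
  if n%:R <= w then w else 0.

Definition phit (R : realType) (V E : finType) (src dst : E -> V) (k : nat)
  (wp wm : nat -> V -> 'I_k -> R) (i : nat) (v : V) (j : 'I_k) : R :=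
  (wtrunc #|V| (wp i v j) - wtrunc #|V| (wm i v j)) / (deg src dst v)%:R.

(* step (3): f^i is a valid choice (ties in j^* broken arbitrarily) *)
Definition step3 (R : realType) (V E : finType) (src dst : E -> V) (k : nat)
  (phi : V -> 'I_k -> R) (fi : 'I_k -> E -> R) : Prop :=
  forall e : E, exists jstar : 'I_k,
    (forall j : 'I_k, `|phi (src e) j - phi (dst e) j|
                        <= `|phi (src e) jstar - phi (dst e) jstar|) /\
    fi jstar e = (if phi (src e) jstar > phi (dst e) jstar then 1
                  else if phi (src e) jstar < phi (dst e) jstar then -1 else 0) /\
    (forall j : 'I_k, j != jstar -> fi j e = 0).

Definition terminates (R : realType) (V E : finType) (src dst : E -> V) (k : nat)
  (b : V -> 'I_k -> R) (phi : V -> 'I_k -> R) (fi : 'I_k -> E -> R) : Prop :=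
  \sum_(j < k) \sum_(v : V) phi v j * b v j >
  \sum_(j < k) \sum_(v : V) phi v j * incid src dst (fi j) v.

Definition rr (R : realType) (V E : finType) (src dst : E -> V) (k : nat)
  (b : V -> 'I_k -> R) (f : nat -> 'I_k -> E -> R) (i : nat) (v : V) (j : 'I_k) : R :=
  (b v j - incid src dst (f i j) v) / (deg src dst v)%:R.

Definition rcum (R : realType) (V E : finType) (src dst : E -> V) (k : nat)
  (b : V -> 'I_k -> R) (f : nat -> 'I_k -> E -> R) (m : nat) (v : V) (j : 'I_k) : R :=
  \sum_(1 <= i' < m.+1) rr src dst b f i' v j.

(* (wp, wm, f) is an execution of Algorithm MC that reaches round i:
   initial weights are 1, i <= T, and every earlier round i' < i chose a valid
   flow f^{i'}, did not terminate, and updated the weights by step (6). *)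
Definition MC_run_reaches (R : realType) (V E : finType) (src dst : E -> V)
  (k : nat) (b : V -> 'I_k -> R) (alpha : R) (T : nat)
  (wp wm : nat -> V -> 'I_k -> R) (f : nat -> 'I_k -> E -> R) (i : nat) : Prop :=
  [/\ (forall v j, wp 1%N v j = 1 /\ wm 1%N v j = 1),
      (1 <= i <= T)%N &
      forall i' : nat, (1 <= i' < i)%N ->
        [/\ step3 src dst (phit src dst wp wm i') (f i'),
            ~ terminates src dst b (phit src dst wp wm i') (f i') &
            forall v j,
              wp i'.+1 v j = wp i' v j * (1 + alpha * rr src dst b f i' v j) /\
              wm i'.+1 v j = wm i' v j * (1 - alpha * rr src dst b f i' v j)]].

From HB Require Import structures.
From mathcomp Require Import all_boot all_order all_algebra.
From mathcomp Require Import reals exp.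
From mathcomp Require Import sequences lra.
Set Implicit Arguments. Unset Strict Implicit. Unset Printing Implicit Defensive.
Import Order.TTheory GRing.Theory Num.Theory.
Local Open Scope ring_scope.

(* Each update factor [1 +- alpha r] lies in [1/2, 3/2] because [|r| <= 2] and
   [alpha <= 1/4], so the weights stay nonnegative and [1 + x <= e^x] gives
   [w^i_+ <= exp(alpha r^{<= i-1})] and [w^i_- <= exp(-alpha r^{<= i-1})].
   A nonzero truncated potential forces the corresponding weight to be at least
   [n], and taking logarithms yields the bound on the cumulative residual. *)

Lemma incid_norm_le_deg (R : realType) (V E : finType) (src dst : E -> V)
    (g : E -> R) (v : V) :
  (forall e, `|g e| <= 1) -> `|incid src dst g v| <= (deg src dst v)%:R.
Proof.
move=> g_le1; rewrite /incid /deg cardE -sum1_size big_filter natr_sum.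
rewrite (bigID (fun e => (src e == v) || (dst e == v))) /=.
rewrite [X in _ + X]big1 ?addr0; last first.
  by move=> e /norP[/negbTE -> /negbTE ->]; rewrite subr0.
apply: le_trans (ler_norm_sum _ _ _) _.
rewrite [X in _ <= X](eq_bigl (fun e => (src e == v) || (dst e == v))); last first.
  by move=> e; rewrite inE.
apply: ler_sum => e _.
by case: (src e == v); case: (dst e == v);
  rewrite ?subr0 ?sub0r ?normrN ?subrr ?normr0.
Qed.

Lemma step3_norm_le1 (R : realType) (V E : finType) (src dst : E -> V)
    (k : nat) (phi : V -> 'I_k -> R) (fi : 'I_k -> E -> R) :
  step3 src dst phi fi -> forall j e, `|fi j e| <= 1.
Proof.
move=> fi_step j e; have [js [_ [fi_js fi_other]]] := fi_step e.
have [->|/fi_other ->] := eqVneq j js; last by rewrite normr0.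
rewrite fi_js; case: ifP => _; first by rewrite normr1.
by case: ifP => _; rewrite ?normrN ?normr1 ?normr0.
Qed.

Lemma rr_norm_le2 (R : realType) (V E : finType) (src dst : E -> V) (k : nat)
    (b : V -> 'I_k -> R) (f : nat -> 'I_k -> E -> R) (i : nat) (v : V) (j : 'I_k) :
  (0 < deg src dst v)%N -> `|b v j| <= (deg src dst v)%:R ->
  (forall e, `|f i j e| <= 1) -> `|rr src dst b f i v j| <= 2.
Proof.
move=> deg_gt0 b_le f_le1; have B_le := incid_norm_le_deg src dst v f_le1.
rewrite /rr normrM normfV [`|_%:R|]ger0_norm ?ler0n // ler_pdivrMr ?ltr0n //.
by apply: le_trans (ler_normB _ _) _; lra.
Qed.

Lemma mul_updates_le_expR_sum (R : realType) (x w : nat -> R) (i : nat) :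
  w 1%N = 1 ->
  (forall m, (1 <= m < i)%N -> -1 <= x m /\ w m.+1 = w m * (1 + x m)) ->
  forall m, (1 <= m <= i)%N -> 0 <= w m <= expR (\sum_(1 <= l < m) x l).
Proof.
move=> w1 w_step; elim=> [//|[|m] IH] /andP[_ lt_mi].
  by rewrite w1 big_geq // expR0 ler01 lexx.
have [x_ge w_next] := w_step m.+1 lt_mi.
have /andP[w_ge0 w_le] := IH (ltnW lt_mi).
rewrite w_next big_nat_recr //= expRD.
have factor_ge0 : 0 <= 1 + x m.+1 by lra.
by rewrite mulr_ge0 //= ler_pM // expR_ge1Dx.
Qed.

Lemma wtrunc_subr_gt0 (R : realType) (n : nat) (x y : R) :
  0 < wtrunc n x - wtrunc n y -> n%:R <= x.
Proof.
rewrite /wtrunc; have n_ge0 : (0 : R) <= n%:R by [].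
case: ifP => [n_le _ //|_]; rewrite sub0r oppr_gt0.
by case: ifP => [n_le_y|_]; lra.
Qed.

Lemma ln_le_of_le_expR (R : realType) (a w s : R) :
  0 < a -> a <= w -> w <= expR s -> ln a <= s.
Proof.
move=> a_gt0 a_le w_le; rewrite -[s]expRK ler_ln ?posrE ?expR_gt0 //.
exact: le_trans w_le.
Qed.

Theorem lemma2p13 (R : realType) (V E : finType) (src dst : E -> V)
  (k : nat) (b : V -> 'I_k -> R) (alpha : R) (T : nat)
  (wp wm : nat -> V -> 'I_k -> R) (f : nat -> 'I_k -> E -> R) (i : nat) :
  (3 <= #|V|)%N ->
  (forall e : E, src e != dst e) ->
  (forall v : V, (1 <= deg src dst v)%N) ->
  (1 <= k)%N ->
  (forall v j, `|b v j| <= (deg src dst v)%:R) ->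
  0 < alpha -> alpha <= 1 / 4 ->
  (1 <= T)%N ->
  MC_run_reaches src dst b alpha T wp wm f i ->
  forall (v : V) (j : 'I_k),
    (0 < phit src dst wp wm i v j ->
       ln (#|V|%:R) / alpha <= rcum src dst b f i.-1 v j) /\
    (phit src dst wp wm i v j < 0 ->
       rcum src dst b f i.-1 v j <= - (ln (#|V|%:R) / alpha)).
Proof.
move=> V_ge3 _ deg_ge1 _ b_le alpha_gt0 alpha_le _ [w_init /andP[i_ge1 _] run] v j.
set S := rcum src dst b f i.-1 v j.
have r_le2 m : (1 <= m < i)%N -> `|rr src dst b f m v j| <= 2.
  move=> /run[f_step _ _]; apply: rr_norm_le2 => //.
  exact: step3_norm_le1 f_step j.
have sum_rr : \sum_(1 <= l < i) alpha * rr src dst b f l v j = alpha * S.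
  by rewrite -mulr_sumr /S /rcum prednK.
have [wp1 wm1] := w_init v j.
have i_range : (1 <= i <= i)%N by rewrite i_ge1 leqnn.
have /andP[_ wp_le] : 0 <= wp i v j <= expR (alpha * S).
  rewrite -sum_rr; apply: (mul_updates_le_expR_sum (w := wp^~ v ^~ j) _ _ i_range) => //.
  move=> m m_i; have [_ _ /(_ v j)[-> _]] := run m m_i.
  by split=> //; have := r_le2 m m_i; rewrite ler_norml; nra.
have /andP[_ wm_le] : 0 <= wm i v j <= expR (- (alpha * S)).
  rewrite -sum_rr -sumrN; apply: (mul_updates_le_expR_sum (w := wm^~ v ^~ j) _ _ i_range) => //.
  move=> m m_i; have [_ _ /(_ v j)[_ ->]] := run m m_i.
  by split=> //; have := r_le2 m m_i; rewrite ler_norml; nra.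
have n_gt0 : (0 : R) < #|V|%:R by rewrite ltr0n; apply: leq_trans V_ge3.
rewrite /phit; split.
- rewrite pmulr_lgt0 ?invr_gt0 ?ltr0n // => /wtrunc_subr_gt0 n_le.
  rewrite ler_pdivrMr // mulrC; exact: ln_le_of_le_expR n_gt0 n_le wp_le.
- rewrite pmulr_llt0 ?invr_gt0 ?ltr0n // -subr_gt0 sub0r opprB => /wtrunc_subr_gt0 n_le.
  rewrite lerNr ler_pdivrMr // mulrC mulrN; exact: ln_le_of_le_expR n_gt0 n_le wm_le.
Qed.
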